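(* Let $\bm A\in\mathbb R^{m\times n}$, $\bm D\in\mathbb R^{n\times d}$ with $\bm D\bm D^\top=\bm I_n$, $0<\alpha\le1$, and let $s\ge2$ be an integer. Let $\bm h,\bm x\in\mathbb R^n$, let $S$ be an index set of $s$ largest-magnitude entries of $\bm D^\top\bm h$ and $T$ an index set of $s$ largest-magnitude entries of $\bm D^\top\bm x$, and assume $$\|\bm D_{S^c}^\top\bm h\|_1-\alpha\|\bm D_{S^c}^\top\bm h\|_2\le a\|\bm D_S^\top\bm h\|_1+b\|\bm D_S^\top\bm h\|_2+c\|\bm D_{T^c}^\top\bm x\|_1+\eta\|\bm A\bm h\|_2+\gamma$$ for constants $a>0$, $b,c,\eta,\gamma\ge0$ with $(a-1)\sqrt s+(b+1)\ge0$. Then for every $\bar\varepsilon>0$, $$\|\bm D_{S^c}^\top\bm h\|_2\le\Bigg(\sqrt{\frac{a\sqrt s+b}{\sqrt s}+\frac{\alpha^2}{4s}}+\frac{\alpha+\bar\varepsilon}{2\sqrt s}\Bigg)\|\bm D_S^\top\bm h\|_2+\frac1{2\bar\varepsilon}\big(c\|\bm D_{T^c}^\top\bm x\|_1+\eta\|\bm A\bm h\|_2+\gamma\big).$$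
   Context: For an index set $S\subseteq\{1,\dots,d\}$, $S^c$ is its complement and $\bm D_S$ denotes $\bm D$ with all columns not indexed by $S$ set to zero (so $\bm D_S^\top\bm h$ is $\bm D^\top\bm h$ with entries outside $S$ set to zero). *)

From mathcomp Require Import all_boot all_order all_algebra.
From mathcomp Require Import reals.
Set Implicit Arguments. Unset Strict Implicit. Unset Printing Implicit Defensive.
Import Order.TTheory GRing.Theory Num.Theory.
Local Open Scope ring_scope.

Definition norm1 (R : realType) (k : nat) (v : 'cV[R]_k) : R :=
  \sum_(i < k) `|v i 0|.
Definition norm2 (R : realType) (k : nat) (v : 'cV[R]_k) : R :=
  Num.sqrt (\sum_(i < k) (v i 0) ^+ 2).

Definition restr (R : realType) (k : nat) (S : {set 'I_k}) (v : 'cV[R]_k)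
  : 'cV[R]_k := \col_i (if i \in S then v i 0 else 0).

Definition largest_set (R : realType) (k : nat) (s : nat) (v : 'cV[R]_k)
  (S : {set 'I_k}) : Prop :=
  #|S| = s /\ (forall i j, i \in S -> j \notin S -> `|v j 0| <= `|v i 0|).

From mathcomp Require Import all_boot all_order all_algebra.
From mathcomp Require Import reals.
From mathcomp Require Import ring lra.
Import Order.TTheory GRing.Theory Num.Theory.
Local Open Scope ring_scope.

(* Write v := D^T h, X := |v_{S^c}|_2, Y := |v_S|_2, P := |v_{S^c}|_1,
   Q := |v_S|_1, and K for the remaining terms.  Cauchy-Schwarz gives
   Q <= sqrt s Y, and since every entry off S is at most the mean of the
   entries on S, s X^2 <= P Q.  Combined with the hypothesis
   P <= alpha X + a Q + b Y + K this yields the quadratic inequality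
   sqrt s X^2 <= alpha X Y + (a sqrt s + b) Y^2 + K Y, which is solved by
   completing the square in X and splitting the linear term K Y with AM-GM. *)

Lemma sqr_sum_norm_le (R : realDomainType) (I : finType) (S : {set I}) (f : I -> R) :
  (\sum_(i in S) `|f i|) ^+ 2 <= #|S|%:R * \sum_(i in S) f i ^+ 2.
Proof.
have [/cards0_eq -> | S_gt0] := posnP #|S|.
  by rewrite !big_set0 expr0n cards0 mul0r.
set Q := \sum_(i in S) `|f i|; set n := #|S|%:R.
have n_gt0 : 0 < n by rewrite ltr0n.
(* expand the nonnegative "variance" sum of (n |f i| - Q)^2 *)
have var_ge0 : 0 <= n * (n * \sum_(i in S) f i ^+ 2 - Q ^+ 2).
  have -> : n * (n * \sum_(i in S) f i ^+ 2 - Q ^+ 2) =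
            \sum_(i in S) (n * `|f i| - Q) ^+ 2.
    transitivity (\sum_(i in S) (n ^+ 2 * f i ^+ 2 - 2 * n * Q * `|f i| + Q ^+ 2)).
      rewrite !big_split /= sumrN sumr_const -!mulr_sumr -/Q -mulr_natl -/n.
      ring.
    by apply: eq_bigr => i _; rewrite -[f i ^+ 2]real_normK ?num_real //; ring.
  by apply: sumr_ge0 => i _; exact: sqr_ge0.
by rewrite -subr_ge0 -(pmulr_rge0 _ n_gt0).
Qed.

Section RestrictedNorms.
Variables (R : realType) (k : nat).
Implicit Types (S : {set 'I_k}) (v : 'cV[R]_k).

Lemma norm1_ge0 v : 0 <= norm1 v.
Proof. exact: sumr_ge0. Qed.

Lemma norm2_ge0 v : 0 <= norm2 v.
Proof. exact: sqrtr_ge0. Qed.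

Lemma norm1_restr S v : norm1 (restr S v) = \sum_(i in S) `|v i 0|.
Proof.
rewrite /norm1 [RHS]big_mkcond; apply: eq_bigr => i _; rewrite mxE.
by case: (i \in S); rewrite ?normr0.
Qed.

Lemma sqr_norm2_restr S v : norm2 (restr S v) ^+ 2 = \sum_(i in S) v i 0 ^+ 2.
Proof.
rewrite /norm2 sqr_sqrtr; last by apply: sumr_ge0 => i _; exact: sqr_ge0.
rewrite [RHS]big_mkcond; apply: eq_bigr => i _; rewrite mxE.
by case: (i \in S); rewrite ?expr0n.
Qed.

Lemma norm1_restr_le S v :
  norm1 (restr S v) <= Num.sqrt #|S|%:R * norm2 (restr S v).
Proof.
have rhs_ge0 : 0 <= Num.sqrt #|S|%:R * norm2 (restr S v).
  by rewrite mulr_ge0 ?sqrtr_ge0 ?norm2_ge0.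
rewrite -(ler_pXn2r (n := 2)) ?nnegrE ?norm1_ge0 //.
rewrite exprMn sqr_sqrtr ?ler0n // sqr_norm2_restr norm1_restr.
exact: sqr_sum_norm_le.
Qed.

Lemma largest_set_tail s S v : largest_set s v S ->
  s%:R * norm2 (restr (~: S) v) ^+ 2 <= norm1 (restr (~: S) v) * norm1 (restr S v).
Proof.
case=> cardS le_SC_S; rewrite sqr_norm2_restr !norm1_restr mulr_sumr mulr_suml.
apply: ler_sum => j; rewrite inE => jS.
have mean_ge : s%:R * `|v j 0| <= \sum_(i in S) `|v i 0|.
  by rewrite -cardS mulr_natl -sumr_const; apply: ler_sum => i iS; exact: le_SC_S.
by rewrite -real_normK ?num_real // expr2 mulrA [leRHS]mulrC ler_wpM2r.
Qed.

End RestrictedNorms.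

Section QuadraticInequality.
Variable R : rcfType.

Lemma sqr_le_split_linear {p Y L e : R} : 0 <= p -> 0 <= Y -> 0 <= L -> 0 < e ->
  p ^+ 2 * Y ^+ 2 + L * Y <= (p * Y + e / 2 * Y + L / (2 * e)) ^+ 2.
Proof.
move=> p_ge0 Y_ge0 L_ge0 e_gt0.
have amgm : L * Y <= (e / 2 * Y + L / (2 * e)) ^+ 2.
  have -> : L * Y = e / 2 * Y * (L / (2 * e)) *+ 4.
    by rewrite -mulr_natr; field; rewrite gt_eqF.
  exact: leif_AGM2_scaled.
have cross_ge0 : 0 <= p * Y * (e / 2 * Y + L / (2 * e)).
  have e_ge0 := ltW e_gt0.
  by rewrite ?(mulr_ge0, addr_ge0, invr_ge0).
have -> : (p * Y + e / 2 * Y + L / (2 * e)) ^+ 2 = p ^+ 2 * Y ^+ 2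
    + 2 * (p * Y * (e / 2 * Y + L / (2 * e))) + (e / 2 * Y + L / (2 * e)) ^+ 2.
  by ring.
lra.
Qed.

Lemma quadratic_le (X Y beta q L e : R) :
  0 <= Y -> 0 <= q -> 0 <= L -> 0 < e ->
  X ^+ 2 <= beta * X * Y + q * Y ^+ 2 + L * Y ->
  X <= (Num.sqrt (q + beta ^+ 2 / 4) + (beta + e) / 2) * Y + L / (2 * e).
Proof.
move=> Y_ge0 q_ge0 L_ge0 e_gt0 quad.
have disc_ge0 : 0 <= q + beta ^+ 2 / 4 by rewrite addr_ge0 ?divr_ge0 ?sqr_ge0.
set p := Num.sqrt _; set W := X - beta / 2 * Y; set Z := p * Y + e / 2 * Y + L / (2 * e).
have p_ge0 : 0 <= p by exact: sqrtr_ge0.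
have Z_ge0 : 0 <= Z.
  by have e_ge0 := ltW e_gt0; rewrite ?(mulr_ge0, addr_ge0, invr_ge0).
suff W_le : W <= Z by move: W_le; rewrite /W /Z; lra.
have [W_le0 | W_gt0] := lerP W 0; first exact: le_trans W_le0 Z_ge0.
suff sqr_le : W ^+ 2 <= Z ^+ 2 by rewrite -(ler_pXn2r (n := 2)) ?nnegrE // ltW.
apply: le_trans (sqr_le_split_linear p_ge0 Y_ge0 L_ge0 e_gt0).
have -> : W ^+ 2 = X ^+ 2 - beta * X * Y + beta ^+ 2 / 4 * Y ^+ 2 by rewrite /W; field.
rewrite sqr_sqrtr //; lra.
Qed.

Lemma scaled_quadratic_le (r X Y beta q L e : R) :
  0 < r -> 0 <= Y -> 0 <= q -> 0 <= L -> 0 < e ->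
  r * X ^+ 2 <= beta * X * Y + q * Y ^+ 2 + L * Y ->
  X <= (Num.sqrt (q / r + beta ^+ 2 / (4 * r ^+ 2)) + (beta + e) / (2 * r)) * Y
       + (2 * e)^-1 * L.
Proof.
move=> r_gt0 Y_ge0 q_ge0 L_ge0 e_gt0 quad.
have r_neq0 : r != 0 by rewrite gt_eqF.
have -> : beta ^+ 2 / (4 * r ^+ 2) = (beta / r) ^+ 2 / 4 by field.
have -> : (beta + e) / (2 * r) = (beta / r + e / r) / 2 by field.
have -> : (2 * e)^-1 * L = L / r / (2 * (e / r)) by field; rewrite r_neq0 gt_eqF.
have r_ge0 := ltW r_gt0.
apply: quadratic_le; rewrite ?divr_ge0 ?divr_gt0 //.
rewrite -(ler_pM2l r_gt0) (le_trans quad) //.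
by rewrite [leRHS](_ : _ = beta * X * Y + q * Y ^+ 2 + L * Y) //; field.
Qed.

End QuadraticInequality.

Theorem proposition3 (R : realType) (m n d s : nat)
  (A : 'M[R]_(m, n)) (D : 'M[R]_(n, d)) (alpha a b c eta gamma : R)
  (h x : 'cV[R]_n) (S T : {set 'I_d}) :
  D *m D^T = 1%:M ->
  0 < alpha -> alpha <= 1 ->
  (2 <= s)%N ->
  largest_set s (D^T *m h) S ->
  largest_set s (D^T *m x) T ->
  0 < a -> 0 <= b -> 0 <= c -> 0 <= eta -> 0 <= gamma ->
  0 <= (a - 1) * Num.sqrt (s%:R) + (b + 1) ->
  norm1 (restr (~: S) (D^T *m h)) - alpha * norm2 (restr (~: S) (D^T *m h))
    <= a * norm1 (restr S (D^T *m h)) + b * norm2 (restr S (D^T *m h))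
       + c * norm1 (restr (~: T) (D^T *m x)) + eta * norm2 (A *m h) + gamma ->
  forall epsb : R, 0 < epsb ->
  norm2 (restr (~: S) (D^T *m h))
    <= (Num.sqrt ((a * Num.sqrt (s%:R) + b) / Num.sqrt (s%:R)
                  + alpha ^+ 2 / (4 * s%:R))
        + (alpha + epsb) / (2 * Num.sqrt (s%:R))) * norm2 (restr S (D^T *m h))
       + (2 * epsb)^-1 * (c * norm1 (restr (~: T) (D^T *m x))
                          + eta * norm2 (A *m h) + gamma).
Proof.
move=> _ _ _ s_ge2 largeS _ a_gt0 b_ge0 c_ge0 eta_ge0 gamma_ge0 _ hyp epsb epsb_gt0.
set v := D^T *m h in largeS hyp *.
set X := norm2 (restr (~: S) v) in hyp *; set Y := norm2 (restr S v) in hyp *.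
set P := norm1 (restr (~: S) v) in hyp *; set Q := norm1 (restr S v) in hyp *.
set K := c * _ + _ + gamma; set r := Num.sqrt (s%:R : R).
have r_gt0 : 0 < r by rewrite sqrtr_gt0 ltr0n (leq_trans _ s_ge2).
have sqr_r : r ^+ 2 = s%:R by rewrite sqr_sqrtr ?ler0n.
have Y_ge0 : 0 <= Y by exact: norm2_ge0.
have P_ge0 : 0 <= P by exact: norm1_ge0.
have Q_ge0 : 0 <= Q by exact: norm1_ge0.
have K_ge0 : 0 <= K by rewrite !addr_ge0 ?mulr_ge0 ?norm1_ge0 ?norm2_ge0.
have P_le : P <= alpha * X + a * Q + b * Y + K by rewrite /K; lra.
have Q_le : Q <= r * Y by rewrite /r -(proj1 largeS) norm1_restr_le.
have tail : r ^+ 2 * X ^+ 2 <= P * Q by rewrite sqr_r largest_set_tail.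
rewrite -sqr_r; apply: scaled_quadratic_le => //.
  by rewrite addr_ge0 // mulr_ge0 ?ltW.
rewrite -(ler_pM2l r_gt0) mulrA -expr2 (le_trans tail) //.
have bound_ge0 : 0 <= alpha * X + a * Q + b * Y + K by lra.
apply: (le_trans (ler_wpM2r Q_ge0 P_le)).
apply: (le_trans (ler_wpM2l bound_ge0 Q_le)).
have := ler_wpM2l (ltW a_gt0) Q_le; nra.
Qed.
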